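(* Let $\Omega\subseteq\mathbb{F}$ be a P-closed set with finite P-basis $\mathcal{B}$ and let $n=\#\mathcal{B}=\mathrm{Rk}(\Omega)$. For all $F,G\in\mathbb{F}[x;\sigma,\delta]_n$ and all $a\in\mathbb{F}^*=\mathbb{F}\setminus\{0\}$: (1) $\mathrm{wt}_\Omega(F)=0$ if and only if $E_\mathcal{B}(F)=0$, which holds if and only if $F=0$; (2) $\mathrm{wt}_\Omega(F+G)\le \mathrm{wt}_\Omega(F)+\mathrm{wt}_\Omega(G)$; (3) $\mathrm{wt}_\Omega(aF)=\mathrm{wt}_\Omega(F)$. Consequently the same three properties hold for $\mathrm{wt}_\mathcal{B}$ on $\mathbb{F}^\mathcal{B}$, and $\mathrm{d}_\mathcal{B}$ is a metric.
   Context: $\mathbb{F}$ is a division ring, $\sigma:\mathbb{F}\to\mathbb{F}$ a ring endomorphism and $\delta:\mathbb{F}\to\mathbb{F}$ a $\sigma$-derivation (additive, with $\delta(ab)=\sigma(a)\delta(b)+\delta(a)b$). The skew polynomial ring $\mathbb{F}[x;\sigma,\delta]$ is the left $\mathbb{F}$-vector space with basis $\{x^i\}_{i\ge0}$ and multiplication determined by $x^ix^j=x^{i+j}$ and $xa=\sigma(a)x+\delta(a)$ for $a\in\mathbb{F}$. $\mathbb{F}[x;\sigma,\delta]_n$ denotes the skew polynomials of degree $<n$. For $F\in\mathbb{F}[x;\sigma,\delta]$ and $a\in\mathbb{F}$, the evaluation $F(a)$ is the unique element of $\mathbb{F}$ such that $F=G(x-a)+F(a)$ for some $G\in\mathbb{F}[x;\sigma,\delta]$.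 For $\Omega\subseteq\mathbb{F}$, $\mathbb{F}^\Omega$ is the set of functions $\Omega\to\mathbb{F}$ and $E_\Omega(F)\in\mathbb{F}^\Omega$ is $a\mapsto F(a)$. For $A\subseteq\mathbb{F}[x;\sigma,\delta]$, $Z(A)=\{a\in\mathbb{F}: F(a)=0\ \forall F\in A\}$; for $\Omega\subseteq\mathbb{F}$, $I(\Omega)$ is the left ideal of skew polynomials vanishing on $\Omega$, and $F_\Omega$ is its unique monic generator of minimal degree. The P-closure of $\Omega$ is $\overline{\Omega}=Z(I(\Omega))$; $\Omega$ is P-closed if $\overline{\Omega}=\Omega$. A set $\Omega$ is P-independent if no $a\in\Omega$ lies in $\overline{\Omega\setminus\{a\}}$. A P-basis of a P-closed set $\Omega$ is a P-independent $\mathcal{B}\subseteq\Omega$ with $\overline{\mathcal{B}}=\Omega$. For finitely generated P-closed $\Omega$ all P-bases are finite with $\deg(F_\Omega)$ elements; this number is the rank $\mathrm{Rk}(\Omega)$. (Known fact: if $\mathcal{B}=\{b_1,\dots,b_n\}$ is a P-basis, then for any $a_1,\dots,a_n$ there is a unique $F$ of degree $<n$ with $F(b_i)=a_i$, so $E_\mathcal{B}:\mathbb{F}[x;\sigma,\delta]_n\to\mathbb{F}^\mathcal{B}$ is a left-linear isomorphism.) Skew weight: for $F\in\mathbb{F}[x;\sigma,\delta]_n$, $Z_\Omega(F)=Z(F)\cap\Omega$ (a P-closed set) and $\mathrm{wt}_\Omega(F)=n-\mathrm{Rk}(Z_\Omega(F))$; for $f\in\mathbb{F}^\mathcal{B}$,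 $\mathrm{wt}_\mathcal{B}(f)=\mathrm{wt}_\Omega(F)$ where $F\in\mathbb{F}[x;\sigma,\delta]_n$ is the unique polynomial with $E_\mathcal{B}(F)=f$; the skew metric is $\mathrm{d}_\mathcal{B}(f,g)=\mathrm{wt}_\mathcal{B}(f-g)$. *)

(* Skew polynomials F[x; s, d] over a division ring R are
   represented by their (left) coefficient sequences in {poly R}; the
   additive structure and left scaling of {poly R} coincide with those of
   the skew polynomial ring, and the skew product is defined below. *)
From HB Require Import structures.
From mathcomp Require Import all_boot all_order all_algebra.
From Stdlib Require Import ClassicalEpsilon.
Set Implicit Arguments. Unset Strict Implicit. Unset Printing Implicit Defensive.
Import GRing.Theory.
Local Open Scope ring_scope.

Section Skew.
Variables (R : unitRingType) (s : R -> R) (d : R -> R).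

(* left multiplication by x:  x * (sum c_j x^j) = sum (s(c_j) x^(j+1) + d(c_j) x^j) *)
Definition mulxl (p : {poly R}) : {poly R} := map_poly s p * 'X + map_poly d p.

Definition smul (F H : {poly R}) : {poly R} :=
  \sum_(i < size F) F`_i *: iter i mulxl H.

Definition ev (F : {poly R}) (a : R) : R :=
  epsilon (inhabits 0) (fun c => exists G, F = smul G ('X - a%:P) + c%:P).

Definition Zset (A : {poly R} -> Prop) : R -> Prop :=
  fun a => forall F, A F -> ev F a = 0.

Definition Iset (Om : R -> Prop) : {poly R} -> Prop :=
  fun F => forall a, Om a -> ev F a = 0.

Definition Pclosure (Om : R -> Prop) : R -> Prop := Zset (Iset Om).
Definition Pclosed (Om : R -> Prop) : Prop := forall a, Pclosure Om a <-> Om a.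
Definition Pindependent (Om : R -> Prop) : Prop :=
  forall a, Om a -> ~ Pclosure (fun b => Om b /\ b <> a) a.
Definition Pbasis (Om : R -> Prop) (B : seq R) : Prop :=
  uniq B /\ (forall b, b \in B -> Om b) /\ Pindependent (fun b => b \in B)
  /\ (forall a, Pclosure (fun b => b \in B) a <-> Om a).

Definition minpoly_deg (Om : R -> Prop) (r : nat) : Prop :=
  exists F, F \is monic /\ Iset Om F /\ size F = r.+1 /\
    forall G, G != 0 -> Iset Om G -> (r.+1 <= size G)%N.

Definition Rk (Om : R -> Prop) : nat := epsilon (inhabits 0%N) (minpoly_deg Om).

Definition ZOm (Om : R -> Prop) (F : {poly R}) : R -> Prop :=
  fun a => Om a /\ ev F a = 0.

Definition wtO (Om : R -> Prop) (F : {poly R}) : nat := (Rk Om - Rk (ZOm Om F))%N.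

(* E_B(F) in F^B, B listed as a sequence (coordinates indexed by position) *)
Definition EB (B : seq R) (F : {poly R}) : 'rV[R]_(size B) :=
  \row_(i < size B) ev F B`_i.

Definition interpB (B : seq R) (f : 'rV[R]_(size B)) : {poly R} :=
  epsilon (inhabits 0) (fun F : {poly R} => (size F <= size B)%N /\ EB B F = f).

Definition wtB (Om : R -> Prop) (B : seq R) (f : 'rV[R]_(size B)) : nat :=
  wtO Om (@interpB B f).

Definition dB (Om : R -> Prop) (B : seq R) (f g : 'rV[R]_(size B)) : nat :=
  @wtB Om B (f - g).

End Skew.
Arguments interpB {R} s d B f.
Arguments wtB {R} s d Om B f.
Arguments dB {R} s d Om B f g.

From Pilot Require Import Defs.
From mathcomp Require Import all_boot all_order all_algebra.
From mathcomp Require Import boolp zify.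
From Stdlib Require Import ClassicalEpsilon.
Set Implicit Arguments. Unset Strict Implicit. Unset Printing Implicit Defensive.
Import GRing.Theory.
Local Open Scope ring_scope.

(* A skew polynomial of degree < n is determined by its values on the P-basis B
   (Lagrange polynomials, reduced modulo a monic polynomial of degree n vanishing on B),
   which gives (1) and makes E_B a bijection; multiplying by a unit does not change the
   zero set, which gives (3).  For (2), the key fact is that a left ideal J containing
   I(Omega) consists of all polynomials vanishing on its zeros in Omega (otherwise J can be
   enlarged to an ideal of codimension one, i.e. the annihilator of a point).  Applied to
   I(Z_F) + I(Z_G), it shows that the n - Rk(Z_{F+G}) polynomials x^j F_{Z_{F+G}} of degree
   < n, which have distinct degrees, lie in the sum of I(Z_F) and I(Z_G) in degree < n,
   whose dimensions are n - Rk(Z_F) and n - Rk(Z_G). *)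

Section SkewPolynomials.
Variable R : unitRingType.
Hypothesis Hdiv : forall x : R, x != 0 -> x \is a GRing.unit.
Variable s : {rmorphism R -> R}.
Variable d : R -> R.
Hypothesis d_add : forall a b : R, d (a + b) = d a + d b.
Hypothesis d_mul : forall a b : R, d (a * b) = s a * d b + d a * b.

Local Notation mulxl := (mulxl s d).
Local Notation smul := (smul s d).
Local Notation ev := (ev s d).

Lemma d0 : d 0 = 0.
Proof. by apply: (addrI (d 0)); rewrite -d_add !addr0. Qed.

Lemma d1 : d 1 = 0.
Proof.
have := d_mul 1 1; rewrite rmorph1 !mul1r mulr1 => h.
by apply: (addrI (d 1)); rewrite addr0 -h.
Qed.

Lemma lreg_neq0 (x : R) : x != 0 -> GRing.lreg x.
Proof. by move/Hdiv/mulrI. Qed.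

Lemma rmorph_neq0 (c : R) : c != 0 -> s c != 0.
Proof. by move/Hdiv/(rmorph_unit s); apply: contraTneq => ->; rewrite unitr0. Qed.

Lemma coef_mulxl p i :
  (mulxl p)`_i = (if i == 0%N then 0 else s p`_i.-1) + d p`_i.
Proof. by rewrite /Defs.mulxl coefD coefMX !coef_map_id0 ?rmorph0 ?d0. Qed.

Lemma mulxlD p q : mulxl (p + q) = mulxl p + mulxl q.
Proof.
apply/polyP => i; rewrite coefD !coef_mulxl !coefD d_add rmorphD.
by case: (i == 0%N); [rewrite !add0r | rewrite addrACA].
Qed.

Lemma mulxl0 : mulxl 0 = 0.
Proof. by apply/polyP => i; rewrite coef_mulxl !coef0 rmorph0 d0 addr0; case: (i == 0%N). Qed.

Lemma mulxlZ c p : mulxl (c *: p) = s c *: mulxl p + d c *: p.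
Proof.
apply/polyP => i; rewrite coef_mulxl coefD !coefZ coef_mulxl d_mul mulrDr rmorphM.
by case: (i == 0%N); rewrite ?mulr0 ?add0r ?addrA.
Qed.

Lemma mulxl_sum (I : Type) (r : seq I) (P : pred I) (F : I -> {poly R}) :
  mulxl (\sum_(i <- r | P i) F i) = \sum_(i <- r | P i) mulxl (F i).
Proof. exact: (big_morph mulxl mulxlD mulxl0). Qed.

Lemma mulxlXn i : mulxl 'X^i = 'X^(i.+1).
Proof.
rewrite /Defs.mulxl.
have -> : map_poly d 'X^i = 0.
  by apply/polyP => j; rewrite coef_map_id0 ?d0 // coefXn coef0; case: (j == i); rewrite ?d1 ?d0.
by rewrite map_polyXn -exprSr addr0.
Qed.

(* [s] maps units to units, so it keeps the leading coefficient nonzero. *)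
Lemma size_mulxl p : p != 0 ->
  size (mulxl p) = (size p).+1 /\ lead_coef (mulxl p) = s (lead_coef p).
Proof.
move=> p0; have sp0 : s (lead_coef p) != 0 by rewrite rmorph_neq0 ?lead_coef_eq0.
have size_sp : size (map_poly s p) = size p by rewrite size_map_poly_id0.
have size_spX : size (map_poly s p * 'X) = (size p).+1.
  by rewrite size_mulX ?size_sp // -size_poly_eq0 size_sp size_poly_eq0.
have small_d : (size (map_poly d p) < size (map_poly s p * 'X)%R)%N.
  by rewrite size_spX ltnS size_poly.
rewrite /Defs.mulxl size_polyDl // lead_coefDl // lead_coefMX.
by rewrite lead_coef_map_id0 ?rmorph0.
Qed.

Lemma size_mulxl_le p : (size (mulxl p) <= (size p).+1)%N.
Proof. by have [->|/size_mulxl[->]//] := eqVneq p 0; rewrite mulxl0 size_poly0. Qed.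

Lemma monic_iter_mulxl p i : p \is monic ->
  iter i mulxl p \is monic /\ size (iter i mulxl p) = (size p + i)%N.
Proof.
move=> pm; elim: i => [|i [mi si]]; first by rewrite addn0.
have [/= -> lead_i] := size_mulxl (monic_neq0 mi).
by split; [apply/monicP; rewrite lead_i (monicP mi) rmorph1 | rewrite si addnS].
Qed.

Lemma size_iter_mulxl_le p i : (size (iter i mulxl p) <= size p + i)%N.
Proof.
elim: i => [|i IH]; first by rewrite addn0.
by rewrite iterS addnS (leq_trans (size_mulxl_le _)).
Qed.

Lemma smulE (F H : {poly R}) m : (size F <= m)%N ->
  smul F H = \sum_(i < m) F`_i *: iter i mulxl H.
Proof.
move=> hm; rewrite /Defs.smul (big_ord_widen m (fun i => F`_i *: iter i mulxl H) hm).
rewrite big_mkcond /=; apply: eq_bigr => i _.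
by case: ltnP => // hi; rewrite nth_default // scale0r.
Qed.

Lemma smulD (F G H : {poly R}) : smul (F + G) H = smul F H + smul G H.
Proof.
rewrite !(smulE _ (leq_maxl (size F) (size G))) (smulE _ (leq_maxr (size F) (size G))).
rewrite (smulE _ (size_polyD F G)) -big_split /=; apply: eq_bigr => i _.
by rewrite coefD scalerDl.
Qed.

Lemma smulZ c (F H : {poly R}) : smul (c *: F) H = c *: smul F H.
Proof.
rewrite !(smulE _ (leqnn (size F))) (smulE _ (size_scale_leq c F)) scaler_sumr.
by apply: eq_bigr => i _; rewrite coefZ scalerA.
Qed.

Lemma smul0 (H : {poly R}) : smul 0 H = 0.
Proof. by rewrite /Defs.smul size_poly0 big_ord0. Qed.

Lemma smulB (F G H : {poly R}) : smul (F - G) H = smul F H - smul G H.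
Proof. by rewrite smulD -scaleN1r smulZ scaleN1r. Qed.

Lemma smulC c (H : {poly R}) : smul c%:P H = c *: H.
Proof. by rewrite (smulE _ (size_polyC_leq1 c)) big_ord1 coefC. Qed.

Lemma smulXn k (H : {poly R}) : smul 'X^k H = iter k mulxl H.
Proof.
rewrite (smulE _ (leqnn _)) size_polyXn big_ord_recr /= coefXn eqxx scale1r.
by rewrite big1 ?add0r // => i _; rewrite coefXn (ltn_eqF (ltn_ord i)) scale0r.
Qed.

Lemma mulxl_smul (G H : {poly R}) : mulxl (smul G H) = smul (mulxl G) H.
Proof.
rewrite (smulE _ (leqnSn (size G))) (smulE _ (size_mulxl_le G)) mulxl_sum.
under eq_bigr do rewrite mulxlZ -iterS.
under [RHS]eq_bigr do rewrite coef_mulxl scalerDl.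
rewrite !big_split /=; congr (_ + _).
rewrite big_ord_recr /= nth_default // rmorph0 scale0r addr0.
by rewrite [RHS]big_ord_recl /= scale0r add0r.
Qed.

Lemma size_smul_monic (G H : {poly R}) : G != 0 -> H \is monic ->
  size (smul G H) = (size G + size H).-1 /\ lead_coef (smul G H) = lead_coef G.
Proof.
move=> G0 Hm; have [k sizeG] : exists k, size G = k.+1 by exists (size G).-1; rewrite polySpred.
have Gk : G`_k != 0 by rewrite -lead_coef_eq0 /lead_coef sizeG in G0.
rewrite (smulE H (leqnn _)) sizeG big_ord_recr /=.
have [mk sk] := monic_iter_mulxl k Hm.
have sz : size (G`_k *: iter k mulxl H) = (size H + k)%N.
  by rewrite lreg_size ?sk //; apply: lreg_neq0.
have lead_k : lead_coef (G`_k *: iter k mulxl H) = G`_k.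
  by rewrite lead_coef_lreg ?(monicP mk) ?mulr1 //; apply: lreg_neq0.
have small : (size (\sum_(i < k) G`_i *: iter i mulxl H)%R < size H + k)%N.
  apply: (big_ind (fun p : {poly R} => size p < size H + k)%N).
  - by rewrite size_poly0 ltn_addr // size_poly_gt0 monic_neq0.
  - by move=> x y hx hy; rewrite (leq_ltn_trans (size_polyD _ _)) // gtn_max hx hy.
  - move=> i _; rewrite (leq_ltn_trans (size_scale_leq _ _)) //.
    by rewrite (leq_ltn_trans (size_iter_mulxl_le _ _)) // ltn_add2l.
rewrite addrC size_polyDl ?sz // lead_coefDl ?sz // lead_k /lead_coef sizeG.
by rewrite addnC.
Qed.

Lemma size_sub_lead (p q : {poly R}) : p != 0 -> size p = size q ->
  lead_coef p = lead_coef q -> (size (p - q)%R < size p)%N.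
Proof.
move=> p0 sq lq; rewrite (polySpred p0) ltnS; apply/leq_sizeP => j hj.
rewrite coefB; case: (eqVneq j (size p).-1) => [->|ne].
  by rewrite -/(lead_coef p) lq /lead_coef sq subrr.
have hj' : (size p <= j)%N by rewrite (polySpred p0) ltn_neqAle eq_sym ne hj.
by rewrite !nth_default ?subrr // -sq.
Qed.

Lemma rdiv_monic (M P : {poly R}) : M \is monic ->
  exists Q, (size (P - smul Q M)%R < size M)%N.
Proof.
move=> Mm; have M0 := monic_neq0 Mm.
elim: {P}(size P) {-2}P (leqnn (size P)) => [|k IH] P sizeP.
  by exists 0; rewrite smul0 subr0 (leq_ltn_trans sizeP) // size_poly_gt0.
have [small|large] := ltnP (size P) (size M); first by exists 0; rewrite smul0 subr0.
have P0 : P != 0 by rewrite -size_poly_gt0 (leq_trans _ large) // size_poly_gt0.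
set j := (size P - size M)%N; set T := lead_coef P *: 'X^j.
have [mj sj] := monic_iter_mulxl j Mm.
have lP : GRing.lreg (lead_coef P) by apply: lreg_neq0; rewrite lead_coef_eq0.
have lower : (size (P - smul T M)%R < size P)%N.
  apply: size_sub_lead => //; rewrite smulZ smulXn.
    by rewrite lreg_size // sj subnKC.
  by rewrite lead_coef_lreg // (monicP mj) mulr1.
have [Q' hQ'] := IH (P - smul T M) (leq_trans lower sizeP).
by exists (T + Q'); rewrite smulD opprD addrA.
Qed.

Lemma size_smul_XsubC (G : {poly R}) a : G != 0 ->
  size (smul G ('X - a%:P)) = (size G).+1.
Proof.
by move=> G0; have [-> _] := size_smul_monic G0 (monicXsubC a); rewrite size_XsubC addn2.
Qed.

Lemma ev_spec (F : {poly R}) a : exists G, F = smul G ('X - a%:P) + (ev F a)%:P.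
Proof.
rewrite /Defs.ev.
apply: (epsilon_spec (inhabits 0) (fun c => exists G, F = smul G ('X - a%:P) + c%:P)).
have [G small] := rdiv_monic F (monicXsubC a).
have rC : F - smul G ('X - a%:P) = ((F - smul G ('X - a%:P))`_0)%:P.
  by apply: size1_polyC; move: small; rewrite size_XsubC.
by exists (F - smul G ('X - a%:P))`_0, G; rewrite -rC addrC subrK.
Qed.

Lemma ev_unique (F G : {poly R}) a c : F = smul G ('X - a%:P) + c%:P -> ev F a = c.
Proof.
move=> hF; have [G' hG'] := ev_spec F a.
have E : smul (G' - G) ('X - a%:P) = (c - ev F a)%:P.
  rewrite smulB -[smul G' _](addrK (ev F a)%:P) -[smul G _](addrK c%:P) -hG' -hF.
  by rewrite polyCB opprB addrC addrA subrK.
have [GG|GG] := eqVneq (G' - G) 0.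
  by apply/eqP; rewrite eq_sym -subr_eq0 -polyC_eq0 -E GG smul0.
have := size_polyC_leq1 (c - ev F a); rewrite -E size_smul_XsubC //.
by rewrite ltnS leqNgt size_poly_gt0 GG.
Qed.

Lemma evD (F G : {poly R}) a : ev (F + G) a = ev F a + ev G a.
Proof.
have [QF hF] := ev_spec F a; have [QG hG] := ev_spec G a.
by apply: (ev_unique (G := QF + QG)); rewrite smulD polyCD {1}hF {1}hG addrACA.
Qed.

Lemma evZ c (F : {poly R}) a : ev (c *: F) a = c * ev F a.
Proof.
have [Q hQ] := ev_spec F a.
by apply: (ev_unique (G := c *: Q)); rewrite smulZ -scale_polyC -scalerDr -hQ.
Qed.

Lemma evC c a : ev c%:P a = c.
Proof. by apply: (ev_unique (G := 0)); rewrite smul0 add0r. Qed.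

Lemma ev0 a : ev 0 a = 0.
Proof. by rewrite -polyC0 evC. Qed.

Lemma evB (F G : {poly R}) a : ev (F - G) a = ev F a - ev G a.
Proof. by rewrite evD -scaleN1r evZ mulN1r. Qed.

Lemma ev_sum (I : Type) (r : seq I) (P : pred I) (F : I -> {poly R}) a :
  ev (\sum_(i <- r | P i) F i) a = \sum_(i <- r | P i) ev (F i) a.
Proof. exact: (big_morph (ev^~ a) (fun F G => evD F G a) (ev0 a)). Qed.

(* The product rule [x F = (x G) (x - a) + (s(F a) a + d(F a))] read off the remainder. *)
Lemma ev_mulxl (F : {poly R}) a : ev (mulxl F) a = s (ev F a) * a + d (ev F a).
Proof.
have [G hG] := ev_spec F a; set e := ev F a in hG *.
have mulxl_const : mulxl e%:P = s e *: ('X - a%:P) + (s e * a + d e)%:P.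
  apply/polyP => i; rewrite coef_mulxl coefD coefZ coefB coefX !coefC.
  case: i => [|[|i]] /=.
  - by rewrite add0r sub0r mulrN addrA addNr add0r.
  - by rewrite d0 addr0 subr0 mulr1 addr0.
  - by rewrite rmorph0 d0 addr0 subr0 mulr0 addr0.
apply: (ev_unique (G := mulxl G + (s e)%:P)).
by rewrite {1}hG mulxlD mulxl_smul mulxl_const smulD smulC addrA.
Qed.

(* Closure under left multiplication by scalars and by [x] suffices, as these generate the ring. *)
Record lideal (J : {poly R} -> Prop) : Prop := LIdeal {
  lideal0 : J 0;
  lidealD : forall p q, J p -> J q -> J (p + q);
  lidealZ : forall c p, J p -> J (c *: p);
  lideal_mulxl : forall p, J p -> J (mulxl p) }.

Section LeftIdeal.
Variables (J : {poly R} -> Prop) (hJ : lideal J).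

Lemma lidealB (p q : {poly R}) : J p -> J q -> J (p - q).
Proof. by move=> Jp Jq; apply: lidealD => //; rewrite -scaleN1r; apply: lidealZ. Qed.

Lemma lideal_sum (I : Type) (r : seq I) (P : pred I) (F : I -> {poly R}) :
  (forall i, P i -> J (F i)) -> J (\sum_(i <- r | P i) F i).
Proof. exact: (big_ind J (lideal0 hJ) (lidealD hJ)). Qed.

Lemma lideal_iter (p : {poly R}) i : J p -> J (iter i mulxl p).
Proof. by move=> Jp; elim: i => //= i; apply: lideal_mulxl. Qed.

Lemma lideal_smul (G H : {poly R}) : J H -> J (smul G H).
Proof.
by move=> JH; apply: lideal_sum => i _; apply: lidealZ => //; apply: lideal_iter.
Qed.

Lemma lideal1 : J 1 -> forall P, J P.
Proof.
move=> J1 P; have JX i : J 'X^i.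
  by elim: i => [|i IH]; rewrite ?expr0 // -mulxlXn; apply: lideal_mulxl.
by rewrite -(coefK P) poly_def; apply: lideal_sum => i _; apply: lidealZ.
Qed.

Lemma lideal_mod_monic (M P : {poly R}) : M \is monic -> J M ->
  exists P' : {poly R}, (size P' < size M)%N /\ J (P - P').
Proof.
move=> Mm JM; have [Q small] := rdiv_monic P Mm.
by exists (P - smul Q M); split; rewrite // opprB addrC subrK; apply: lideal_smul.
Qed.

End LeftIdeal.

Definition adjoin (J : {poly R} -> Prop) (g : {poly R}) : {poly R} -> Prop :=
  fun Q => exists G c, J G /\ Q = G + c *: g.

Definition lsum (J1 J2 : {poly R} -> Prop) : {poly R} -> Prop :=
  fun Q => exists U V, [/\ J1 U, J2 V & Q = U + V].

(* [J + R g] is a left ideal as soon as [x g = b g (mod J)]: then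
   [x (c g) = s(c) (x g - b g) + (s(c) b + d(c)) g]. *)
Lemma lideal_adjoin J g b : lideal J -> J (mulxl g - b *: g) -> lideal (adjoin J g).
Proof.
move=> hJ Jg; split.
- by exists 0, 0; rewrite scale0r addr0; split; first exact: lideal0.
- move=> _ _ [G1 [c1 [J1 ->]]] [G2 [c2 [J2 ->]]]; exists (G1 + G2), (c1 + c2).
  by split; [apply: lidealD | rewrite scalerDl addrACA].
- move=> c _ [G1 [c1 [J1 ->]]]; exists (c *: G1), (c * c1).
  by split; [apply: lidealZ | rewrite scalerDr scalerA].
- move=> _ [G1 [c1 [J1 ->]]].
  exists (mulxl G1 + s c1 *: (mulxl g - b *: g)), (s c1 * b + d c1); split.
    by apply: lidealD => //; [apply: lideal_mulxl | apply: lidealZ].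
  rewrite mulxlD mulxlZ -[RHS]addrA; congr (_ + _).
  by rewrite scalerBr scalerA scalerDl addrA subrK.
Qed.

Lemma lideal_lsum J1 J2 : lideal J1 -> lideal J2 -> lideal (lsum J1 J2).
Proof.
move=> h1 h2; split.
- by exists 0, 0; rewrite addr0; split=> //; apply: lideal0.
- move=> _ _ [U1 [V1 [u1 v1 ->]]] [U2 [V2 [u2 v2 ->]]].
  by exists (U1 + U2), (V1 + V2); rewrite addrACA; split=> //; apply: lidealD.
- move=> c _ [U [V [u v ->]]].
  by exists (c *: U), (c *: V); rewrite scalerDr; split=> //; apply: lidealZ.
- move=> _ [U [V [u v ->]]].
  by exists (mulxl U), (mulxl V); rewrite mulxlD; split=> //; apply: lideal_mulxl.
Qed.

Lemma Iset_lideal S : lideal (Iset s d S).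
Proof.
split.
- by move=> a _; rewrite ev0.
- by move=> p q hp hq a ha; rewrite evD hp // hq // addr0.
- by move=> c p hp a ha; rewrite evZ hp // mulr0.
- by move=> p hp a ha; rewrite ev_mulxl hp // rmorph0 d0 mul0r addr0.
Qed.

Fixpoint in_span (ps : seq {poly R}) (w : {poly R}) : Prop :=
  if ps is p :: ps' then exists c u, in_span ps' u /\ w = c *: p + u else w = 0.

Lemma in_span0 ps : in_span ps 0.
Proof. by elim: ps => //= p ps IH; exists 0, 0; rewrite scale0r addr0. Qed.

Lemma in_spanD ps u v : in_span ps u -> in_span ps v -> in_span ps (u + v).
Proof.
elim: ps u v => [|p ps IH] u v /=; first by move=> -> ->; rewrite addr0.
move=> [c1 [u1 [h1 ->]]] [c2 [u2 [h2 ->]]]; exists (c1 + c2), (u1 + u2).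
by split; [apply: IH | rewrite scalerDl addrACA].
Qed.

Lemma in_spanZ ps c u : in_span ps u -> in_span ps (c *: u).
Proof.
elim: ps u => [|p ps IH] u /=; first by move=> ->; rewrite scaler0.
move=> [c1 [u1 [h1 ->]]]; exists (c * c1), (c *: u1).
by split; [apply: IH | rewrite scalerDr scalerA].
Qed.

Lemma in_span_cat ps qs u v : in_span ps u -> in_span qs v -> in_span (ps ++ qs) (u + v).
Proof.
elim: ps u => [|p ps IH] u /=; first by move=> ->; rewrite add0r.
by move=> [c [u' [hu' ->]]] hv; exists c, (u' + v); split; [apply: IH | rewrite addrA].
Qed.

Lemma in_span_mkseq_sum (f : nat -> {poly R}) (c : nat -> R) m :
  in_span (mkseq f m) (\sum_(i < m) c i *: f i).
Proof.
elim: m => [|m IH]; first by rewrite big_ord0.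
rewrite mkseqS -cats1 big_ord_recr /=; apply: in_span_cat => //.
by exists (c m), 0; rewrite addr0; split.
Qed.

Section SpanSizes.
Variable f : {poly R} -> {poly R}.
Hypothesis f_lin : forall c u v, f (u - c *: v) = f u - c *: f v.

Definition span_sizes N ps : {set 'I_N} :=
  [set k : 'I_N | `[< exists w, in_span ps w /\ size (f w) = k.+1 >]].

(* Adding one vector [p] to the family adds at most one new size: two new sizes
   [k2 < k1] would let us cancel [p] from the witness of [k1]. *)
Lemma card_span_sizes N ps : (#|span_sizes N ps| <= size ps)%N.
Proof.
have f0 : f 0 = 0 by have := f_lin 1 0 0; rewrite !scale1r !subrr.
elim: ps => [|p ps IH].
  rewrite leqn0 cards_eq0; apply/eqP/setP => k; rewrite !inE.
  by apply/asboolP => -[w [/= -> ]]; rewrite f0 size_poly0.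
set A := span_sizes N (p :: ps); set B := span_sizes N ps.
have new_max (k1 k2 : 'I_N) : k1 \in A :\: B -> k2 \in A :\: B -> ~ (k2 < k1)%N.
  rewrite !inE => /andP[/asboolP nB1 /asboolP[w1 [[c1 [u1 [h1 ->]]] e1]]].
  move=> /andP[/asboolP nB2 /asboolP[w2 [[c2 [u2 [h2 w2E]]] e2]]] lt21.
  have [c20|c2n] := eqVneq c2 0.
    by apply: nB2; exists u2; rewrite -e2 w2E c20 scale0r add0r.
  set c := c1 * c2^-1.
  have cancel_p : c1 *: p + u1 - c *: w2 = u1 - c *: u2.
    rewrite w2E scalerDr scalerA -mulrA mulVr ?Hdiv // mulr1 opprD addrA.
    by rewrite [c1 *: p + u1]addrC addrK.
  apply: nB1; exists (u1 - c *: u2); split.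
    by apply: in_spanD => //; rewrite -scaleN1r; apply: in_spanZ; apply: in_spanZ.
  rewrite -cancel_p f_lin size_polyDl ?e1 // size_polyN.
  by rewrite (leq_ltn_trans (size_scale_leq _ _)) // e2 ltnS.
have le1 : (#|A :\: B| <= 1)%N.
  apply/card_le1_eqP => k1 k2 h1 h2; apply: val_inj; apply/eqP; rewrite eqn_leq.
  by apply/andP; split; rewrite leqNgt; apply/negP; [apply: new_max | apply: new_max].
rewrite -(cardsID B A) /=.
by rewrite (leq_trans (leq_add (subset_leq_card (subsetIr A B)) le1)) // addn1 ltnS.
Qed.

Lemma span_consecutive_sizes ps k0 m :
  (forall j, (j < m)%N -> exists w, in_span ps w /\ size (f w) = (k0 + j).+1) ->
  (m <= size ps)%N.
Proof.
move=> hw; apply: leq_trans (card_span_sizes (k0 + m) ps).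
have lt_k0 (j : 'I_m) : (k0 + j < k0 + m)%N by rewrite ltn_add2l.
pose g (j : 'I_m) := Ordinal (lt_k0 j).
have g_inj : injective g by move=> a b /(congr1 val) /= /addnI /val_inj.
rewrite -{1}(card_ord m) -cardsT -(card_imset _ g_inj); apply: subset_leq_card.
by apply/subsetP => _ /imsetP[j _ ->]; rewrite inE; apply/asboolP; exact: hw (ltn_ord j).
Qed.

End SpanSizes.

Lemma monic_normalize (p : {poly R}) : p != 0 ->
  (lead_coef p)^-1 *: p \is monic /\ size ((lead_coef p)^-1 *: p) = size p.
Proof.
move=> p0; have lp0 : lead_coef p != 0 by rewrite lead_coef_eq0.
have lreg_inv : GRing.lreg (lead_coef p)^-1 by apply: lreg_neq0; rewrite invr_eq0.
split; last exact: lreg_size.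
by apply/monicP; rewrite lead_coef_lreg // mulVr ?Hdiv.
Qed.

Lemma in_span_Xn (P : {poly R}) m : (size P <= m)%N -> in_span (mkseq (fun i => 'X^i) m) P.
Proof.
move=> sP; have -> : P = \poly_(i < m) P`_i.
  apply/polyP => i; rewrite coef_poly; case: ltnP => // hi.
  by rewrite nth_default // (leq_trans sP hi).
by rewrite poly_def; apply: in_span_mkseq_sum.
Qed.

(* Adjoin the points of [l] one at a time: if [M(b) <> 0], then
   [x M - (x M)(b) M(b)^-1 M] also vanishes at [b]. *)
Lemma vanishing_monic (l : seq R) : exists M, M \is monic /\
  (size M <= (size l).+1)%N /\ forall b, b \in l -> ev M b = 0.
Proof.
elim: l => [|b l [M [Mm [sM hM]]]]; first by exists 1; rewrite monic1 size_poly1.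
have [Mb0|Mb] := eqVneq (ev M b) 0.
  exists M; split=> //; split; first exact: leqW.
  by move=> a; rewrite in_cons => /predU1P[->|/hM].
set c := (s (ev M b) * b + d (ev M b)) * (ev M b)^-1.
have [sx mx] := size_mulxl (monic_neq0 Mm).
have small : (size (- (c *: M)) < size (mulxl M))%N.
  by rewrite size_polyN sx ltnS size_scale_leq.
exists (mulxl M - c *: M); split.
  by apply/monicP; rewrite lead_coefDl // mx (monicP Mm) rmorph1.
split; first by rewrite size_polyDl // sx /= ltnS.
move=> a; rewrite in_cons => /predU1P[->|la].
  by rewrite evB evZ ev_mulxl -mulrA mulVr ?Hdiv // mulr1 subrr.
by rewrite evB evZ ev_mulxl hM // rmorph0 d0 mul0r addr0 mulr0 subrr.
Qed.

Lemma minpoly_deg_uniq S r1 r2 :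
  minpoly_deg s d S r1 -> minpoly_deg s d S r2 -> r1 = r2.
Proof.
move=> [F1 [m1 [I1 [s1 min1]]]] [F2 [m2 [I2 [s2 min2]]]].
have := min2 _ (monic_neq0 m1) I1; have := min1 _ (monic_neq0 m2) I2.
by rewrite s1 s2 !ltnS => le12 le21; apply/eqP; rewrite eqn_leq le12 le21.
Qed.

Lemma RkE S r : minpoly_deg s d S r -> Rk s d S = r.
Proof.
move=> h; apply: (minpoly_deg_uniq _ h).
exact: (epsilon_spec (inhabits 0%N) (minpoly_deg s d S) (ex_intro _ r h)).
Qed.

Lemma minpoly_deg_exists S (G : {poly R}) : G != 0 -> Iset s d S G ->
  exists2 r, (r < size G)%N & minpoly_deg s d S r.
Proof.
move=> G0 IG.
pose attained k := `[< exists H : {poly R}, [/\ H != 0, Iset s d S H & size H = k.+1] >].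
have exG : exists k, attained k.
  by exists (size G).-1; apply/asboolP; exists G; rewrite -polySpred.
case: (ex_minnP exG) => r /asboolP[H [H0 IH sH]] r_min.
have [Hm sHm] := monic_normalize H0.
exists r.
  rewrite (polySpred G0) ltnS; apply: r_min.
  by apply/asboolP; exists G; rewrite -polySpred.
exists ((lead_coef H)^-1 *: H); split => //.
split; first exact: (lidealZ (Iset_lideal S)).
split; first by rewrite sHm.
move=> G' G'0 IG'; rewrite (polySpred G'0) ltnS; apply: r_min.
by apply/asboolP; exists G'; rewrite -polySpred.
Qed.

(* Right division by the minimal polynomial [M] of [S] shows that [I(S)] is the left ideal
   generated by [M], so its elements of degree [< m] are spanned by the [x^j M], [j < m - r]. *)
Lemma Iset_span S r m : minpoly_deg s d S r ->
  exists2 ps, size ps = (m - r)%N &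
    forall P, Iset s d S P -> (size P <= m)%N -> in_span ps P.
Proof.
move=> [M [Mm [IM [sM M_min]]]].
exists (mkseq (fun j => iter j mulxl M) (m - r)); first exact: size_mkseq.
move=> P IP sP; have [Q small] := rdiv_monic P Mm.
have IS_rem : Iset s d S (P - smul Q M).
  by apply: (lidealB (Iset_lideal S)) => //; apply: (lideal_smul (Iset_lideal S)).
have PE : P = smul Q M.
  apply/eqP; rewrite -subr_eq0; apply: contraLR small => rem0.
  by rewrite -leqNgt sM; apply: M_min.
have [Q0|Q0] := eqVneq Q 0; first by rewrite PE Q0 smul0; apply: in_span0.
have [sPQ _] := size_smul_monic Q0 Mm.
rewrite PE (smulE _ (m := (m - r)%N)); first exact: in_span_mkseq_sum.
by move: sP; rewrite PE sPQ sM addnS /=; lia.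
Qed.

Section PBasis.
Variables (Om : R -> Prop) (B : seq R).
Hypotheses (HOm : Pclosed s d Om) (HB : Pbasis s d Om B).
Local Notation n := (size B).
Local Notation IS := (Iset s d).
Local Notation IB := (Iset s d (fun b => b \in B)).

Lemma Iset_basisE F : IB F <-> IS Om F.
Proof.
have [_ [BOm [_ clB]]] := HB.
by split=> [IBF a /clB|IOF b /BOm /IOF]; first exact.
Qed.

Lemma Iset_basis_nth F : IB F <-> forall k, (k < n)%N -> ev F B`_k = 0.
Proof.
split=> [IBF k kn|h b bB]; first exact/IBF/mem_nth.
by rewrite -(nth_index 0 bB); apply: h; rewrite index_mem.
Qed.

Lemma lagrange_family : exists L : 'I_n -> {poly R},
  forall k j, (j < n)%N -> ev (L k) B`_j = (j == k)%:R.
Proof.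
suff /fin_all_exists : forall k : 'I_n, exists Q : {poly R},
  forall j, (j < n)%N -> ev Q B`_j = (j == k)%:R by [].
move=> k; have [uB [_ [indB _]]] := HB.
have [F [IF Fk0]] : exists F,
    Iset s d (fun b => b \in B /\ b <> B`_k) F /\ ev F B`_k != 0.
  apply: NNPP => no_witness; apply: (indB _ (mem_nth 0 (ltn_ord k))) => F IF.
  by apply/eqP; apply: contraT => Fk; exfalso; apply: no_witness; exists F.
exists ((ev F B`_k)^-1 *: F) => j jn; rewrite evZ.
have [->|jk] := eqVneq j k; first by rewrite mulVr ?Hdiv.
rewrite (IF B`_j) ?mulr0 ?(negPf jk) //; split; first exact: mem_nth.
by apply/eqP; rewrite nth_uniq.
Qed.

(* Reducing the Lagrange polynomials modulo a monic [M] vanishing on [B] keeps their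
   values on [B]; their images in [R^n] have [n] distinct sizes, so [deg M >= n]. *)
Lemma Iset_basis_small F : IB F -> (size F <= n)%N -> F = 0.
Proof.
move=> IBF sF; apply/eqP; apply: contraT => F0.
have [L hL] := lagrange_family.
have [Mm sM] := monic_normalize F0; set M := _ *: F in Mm sM.
have IBM : IB M by apply: (lidealZ (Iset_lideal _)).
pose f (P : {poly R}) := \poly_(i < n) ev P B`_i.
have f_lin c u v : f (u - c *: v) = f u - c *: f v.
  by apply/polyP => i; rewrite coefB coefZ !coef_poly; case: ifP; rewrite ?evB ?evZ ?mulr0 ?subr0.
have : (n <= (size M).-1)%N.
  have := span_consecutive_sizes f_lin (ps := mkseq (fun i => 'X^i) (size M).-1) (k0 := 0).
  rewrite size_mkseq; apply=> k kn.
  have [w [sw Iw]] := lideal_mod_monic (Iset_lideal _) (L (Ordinal kn)) Mm IBM.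
  exists w; split; first by apply: in_span_Xn; rewrite -ltnS prednK // size_poly_gt0 monic_neq0.
  have -> : f w = 'X^k.
    apply/polyP => i; rewrite coef_poly coefXn; case: ltnP => [i_n|n_i].
      apply/eqP; rewrite -subr_eq0 -(hL (Ordinal kn) i i_n) -evB -opprB.
      by rewrite -scaleN1r evZ Iw ?mulr0 ?mem_nth.
    by rewrite eq_sym ltn_eqF // (leq_trans kn n_i).
  by rewrite size_polyXn.
have F_pos : (0 < size F)%N by rewrite size_poly_gt0.
by rewrite sM; move: sF F_pos; lia.
Qed.

Lemma basis_monic : exists M, [/\ M \is monic, size M = n.+1 & IB M].
Proof.
have [M [Mm [sM IBM]]] := vanishing_monic B.
exists M; split=> //; apply/eqP; rewrite eqn_leq sM ltnNge /=.
by apply: contra (monic_neq0 Mm) => sMn; rewrite (Iset_basis_small IBM sMn).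
Qed.

Lemma minpoly_deg_basis S : (forall a, S a <-> Om a) -> minpoly_deg s d S n.
Proof.
move=> SOm; have [M [Mm sM IBM]] := basis_monic.
have ISE F : IS S F <-> IB F by rewrite Iset_basisE; split=> IF a /SOm; apply: IF.
exists M; split=> //; split; first exact/ISE.
split=> // G G0 /ISE IBG; rewrite ltnNge; apply: contra G0 => sG.
by rewrite (Iset_basis_small IBG sG).
Qed.

Lemma Rk_Om : Rk s d Om = n.
Proof. exact/RkE/minpoly_deg_basis. Qed.

Lemma Rk_ext S S' : (forall a, S a <-> S' a) -> Rk s d S = Rk s d S'.
Proof. by move=> SS'; congr Rk; apply: funext => a; apply: propext. Qed.

Lemma minpoly_deg_ZOm (F : {poly R}) :
  exists2 r, (r <= n)%N & minpoly_deg s d (ZOm s d Om F) r.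
Proof.
have [M [Mm sM /Iset_basisE IM]] := basis_monic.
have [r] := @minpoly_deg_exists (ZOm s d Om F) M (monic_neq0 Mm) (fun a Za => IM a Za.1).
by rewrite sM ltnS; exists r.
Qed.

(* [x - a] lies in [J] for [a = w u^-1], where [x = w g] and [1 = u g] modulo [J]. *)
Lemma lideal_codim1_point J g : lideal J -> (forall F, IS Om F -> J F) -> ~ J 1 ->
  (forall Q, exists c, J (Q - c *: g)) -> exists2 a, Om a & forall Q, J Q <-> ev Q a = 0.
Proof.
move=> hJ IJ J1 codim; have [u Ju] := codim 1; have [w Jw] := codim 'X.
have u0 : u != 0 by apply/eqP => u0; apply: J1; rewrite -[1]subr0 -(scale0r g) -u0.
set a := w * u^-1.
have JXa : J ('X - a%:P).
  have -> : 'X - a%:P = ('X - w *: g) - a *: (1 - u *: g).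
    rewrite scalerBr scalerA /a -mulrA mulVr ?Hdiv // mulr1 -polyC1 scale_polyC mulr1.
    by rewrite opprB addrA subrK.
  by apply: lidealB => //; apply: lidealZ.
have Jrem Q : J (Q - (ev Q a)%:P).
  by have [G hG] := ev_spec Q a; rewrite {1}hG addrK; apply: lideal_smul.
have vanish Q : J Q -> ev Q a = 0.
  move=> JQ; apply/eqP; apply: contraT => Qa; exfalso; apply: J1.
  rewrite -polyC1 -(mulVr (Hdiv Qa)) -scale_polyC; apply: lidealZ => //.
  by rewrite -[_%:P](subKr Q); apply: lidealB.
exists a; first by apply/HOm => F /IJ; apply: vanish.
split; first exact: vanish.
by move=> Qa; rewrite -[X in J X]subr0 -polyC0 -Qa; apply: Jrem.
Qed.

Section Lagrange.
Variable L : 'I_n -> {poly R}.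
Hypothesis hL : forall k j, (j < n)%N -> ev (L k) B`_j = (j == k)%:R.

Lemma ev_lagrange_sum (c : 'I_n -> R) j (jn : (j < n)%N) :
  ev (\sum_(k < n) c k *: L k) B`_j = c (Ordinal jn).
Proof.
rewrite ev_sum (bigD1 (Ordinal jn)) //= evZ hL // eqxx mulr1 big1 ?addr0 // => k kj.
have jk : (j == k) = false by apply: contraNF kj => /eqP jk; apply/eqP/val_inj.
by rewrite evZ hL // jk mulr0.
Qed.

Lemma lagrange_expand Q : IS Om (Q - \sum_(k < n) ev Q B`_k *: L k).
Proof.
apply/Iset_basisE/Iset_basis_nth => j jn.
by rewrite evB (ev_lagrange_sum (fun k => ev Q B`_k)) subrr.
Qed.

Lemma mulxl_lagrange i : IS Om (mulxl (L i) - B`_i *: L i).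
Proof.
apply/Iset_basisE/Iset_basis_nth => j jn; rewrite evB evZ ev_mulxl !hL //.
have [->|ji] := eqVneq j i; first by rewrite rmorph1 mul1r d1 addr0 mulr1 subrr.
by rewrite rmorph0 d0 mul0r addr0 mulr0 subrr.
Qed.

(* If [P] lies in [J + R L_i] for every [L_i] outside [J], then all [L_i] are congruent
   to multiples of one of them, so [J] has codimension one. *)
Lemma lideal_point_of_adjoin J P : lideal J -> (forall F, IS Om F -> J F) -> ~ J P ->
  (forall i, ~ J (L i) -> adjoin J (L i) P) ->
  exists a, [/\ Om a, forall G, J G -> ev G a = 0 & ev P a != 0].
Proof.
move=> hJ IJ nJP adjP.
have Jexp Q : J (Q - \sum_(k < n) ev Q B`_k *: L k) by apply/IJ/lagrange_expand.
have [i0 Li0] : exists i0, ~ J (L i0).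
  apply: NNPP => allJ; apply: nJP; rewrite -[P](subrK (\sum_(k < n) ev P B`_k *: L k)).
  apply: lidealD => //; apply: lideal_sum => // k _; apply: lidealZ => //.
  by apply: NNPP => Lk; apply: allJ; exists k.
have [G0 [c0 [JG0 P0]]] := adjP i0 Li0.
have /fin_all_exists[e Je] : forall i, exists e, J (L i - e *: L i0).
  move=> i; have [JLi|Li] := classic (J (L i)); first by exists 0; rewrite scale0r subr0.
  have [Gi [ci [JGi Pi]]] := adjP i Li.
  have ci0 : ci != 0 by apply/eqP => ci0; apply: nJP; rewrite Pi ci0 scale0r addr0.
  exists (ci^-1 * c0).
  have -> : L i - (ci^-1 * c0) *: L i0 = ci^-1 *: (G0 - Gi).
    rewrite -[G0](addrK (c0 *: L i0)) -P0 -[Gi](addrK (ci *: L i)) -Pi.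
    rewrite [in RHS]opprB [in RHS]addrC [in RHS]addrA [in RHS]subrK.
    by rewrite scalerBr !scalerA mulVr ?Hdiv // scale1r.
  by apply: lidealZ => //; apply: lidealB.
have codim Q : exists c, J (Q - c *: L i0).
  exists (\sum_(k < n) ev Q B`_k * e k).
  have -> : Q - (\sum_(k < n) ev Q B`_k * e k) *: L i0 =
      (Q - \sum_(k < n) ev Q B`_k *: L k) + \sum_(k < n) ev Q B`_k *: (L k - e k *: L i0).
    under [X in _ = _ + X]eq_bigr do rewrite scalerBr scalerA.
    by rewrite sumrB scaler_suml addrA subrK.
  by apply: (lidealD hJ (Jexp Q)); apply: (lideal_sum hJ) => k _; apply: (lidealZ hJ).
have J1 : ~ J 1 by move=> J1; apply: nJP; apply: (lideal1 hJ J1).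
have [a Oa Ja] := lideal_codim1_point hJ IJ J1 codim.
by exists a; split=> // [G /Ja|]; last by apply/eqP => /Ja.
Qed.

(* Enlarge [J] to [J + R L_i] while this keeps [P] out; each step puts one more [L_i] inside. *)
Lemma lideal_point_rec k J P : lideal J -> (forall F, IS Om F -> J F) -> ~ J P ->
  (#|[set i | `[< ~ J (L i) >]]| <= k)%N ->
  exists a, [/\ Om a, forall G, J G -> ev G a = 0 & ev P a != 0].
Proof.
elim: k J => [|k IH] J hJ IJ nJP card_out;
  (have [[i [Li nP]]|all_adj] := classic (exists i, ~ J (L i) /\ ~ adjoin J (L i) P);
   last by apply: lideal_point_of_adjoin => // i Li; apply: NNPP => nP; apply: all_adj; exists i).
  have : i \in [set i | `[< ~ J (L i) >]] by rewrite inE; apply/asboolP.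
  by move: card_out; rewrite leqn0 cards_eq0 => /eqP ->; rewrite inE.
pose J' := adjoin J (L i).
have JJ' Q : J Q -> J' Q by move=> JQ; exists Q, 0; rewrite scale0r addr0.
have hJ' : lideal J' := lideal_adjoin hJ (IJ _ (mulxl_lagrange i)).
have [|a [Oa J'a Pa]] := IH J' hJ' (fun F IF => JJ' F (IJ F IF)) nP.
  have iJ : i \in [set j | `[< ~ J (L j) >]] by rewrite inE; apply/asboolP.
  rewrite -ltnS; apply: leq_trans card_out; rewrite [X in (_ < X)%N](cardsD1 i) iJ ltnS.
  apply: subset_leq_card; apply/subsetP => j; rewrite !inE => /asboolP Lj.
  apply/andP; split; last by apply/asboolP => JLj; apply/Lj/JJ'.
  apply/eqP => ji; apply: Lj; rewrite ji /J'; exists 0, 1.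
  by rewrite scale1r add0r; split; first exact: lideal0.
by exists a; split=> // G /JJ'; apply: J'a.
Qed.

End Lagrange.

Lemma lideal_vanishing_point J P : lideal J -> (forall F, IS Om F -> J F) -> ~ J P ->
  exists a, [/\ Om a, forall G, J G -> ev G a = 0 & ev P a != 0].
Proof.
have [L hL] := lagrange_family; move=> hJ IJ nJP.
by apply: (lideal_point_rec hL (k := n)) => //; rewrite -[X in (_ <= X)%N]card_ord max_card.
Qed.

(* [I(Z_F) + I(Z_G)] is a left ideal containing [I(Om)], so it is all of [I(Z_F /\ Z_G)]. *)
Lemma Iset_ZOm_lsum (F G P : {poly R}) :
  (forall a, Om a -> ev F a = 0 -> ev G a = 0 -> ev P a = 0) ->
  lsum (IS (ZOm s d Om F)) (IS (ZOm s d Om G)) P.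
Proof.
move=> PFG; have hJ := lideal_lsum (Iset_lideal (ZOm s d Om F)) (Iset_lideal (ZOm s d Om G)).
have IJ Q : IS Om Q -> lsum (IS (ZOm s d Om F)) (IS (ZOm s d Om G)) Q.
  move=> IQ; exists Q, 0.
  by split; [move=> a [/IQ] | apply: lideal0 (Iset_lideal _) | rewrite addr0].
apply: NNPP => nJP; have [a [Oa Ja Pa]] := lideal_vanishing_point hJ IJ nJP.
have Fa : ev F a = 0 by apply: Ja; exists F, 0; split=> [b []|b|]; rewrite ?ev0 ?addr0.
have Ga : ev G a = 0 by apply: Ja; exists 0, G; split=> [b|b []|]; rewrite ?ev0 ?add0r.
by move/eqP: Pa; apply; apply: PFG.
Qed.

Lemma wtO_eq0 (F : {poly R}) : (size F <= n)%N -> wtO s d Om F = 0%N <-> F = 0.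
Proof.
move=> sF; split=> [wt0|->]; last first.
  rewrite /wtO Rk_Om (Rk_ext (S := ZOm s d Om 0) (S' := Om)) ?Rk_Om ?subnn // => a.
  by split=> [[]//|Oa]; split; rewrite ?ev0.
apply/eqP; apply: contraT => F0.
have [r rn mr] := minpoly_deg_ZOm F; have [_ [_ [_ [_ r_min]]]] := mr.
have := r_min F F0 (fun a Za => Za.2).
by move: wt0 sF; rewrite /wtO Rk_Om (RkE mr); lia.
Qed.

Lemma wtOZ c (F : {poly R}) : c != 0 -> wtO s d Om (c *: F) = wtO s d Om F.
Proof.
move=> c0; rewrite /wtO (Rk_ext (S := ZOm s d Om (c *: F)) (S' := ZOm s d Om F)) // => a.
rewrite /ZOm evZ; split=> -[Oa Fa]; split=> //; last by rewrite Fa mulr0.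
by apply: (lreg_neq0 c0); rewrite Fa mulr0.
Qed.

(* The [x^j M_{F+G}], [j < n - Rk Z(F+G)], have distinct degrees and lie in the span of
   the bases of [I(Z_F)] and [I(Z_G)] in degree [< n]. *)
Lemma wtO_add (F G : {poly R}) : (wtO s d Om (F + G) <= wtO s d Om F + wtO s d Om G)%N.
Proof.
have [rF _ mF] := minpoly_deg_ZOm F; have [rG _ mG] := minpoly_deg_ZOm G.
have [rD rDn mD] := minpoly_deg_ZOm (F + G).
rewrite /wtO Rk_Om (RkE mF) (RkE mG) (RkE mD).
have [psF <- spanF] := Iset_span n mF; have [psG <- spanG] := Iset_span n mG.
rewrite -size_cat; have [MD [MDm [IMD [sMD _]]]] := mD.
have [MB [MBm sMB /Iset_basisE IMB]] := basis_monic.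
have ZOm_of_Om H Q : IS Om Q -> IS (ZOm s d Om H) Q by move=> IQ a [/IQ].
apply: (span_consecutive_sizes (f := id) (fun _ _ _ => erefl) (k0 := rD)) => j jn.
set w := iter j mulxl MD; have [_ sw] := monic_iter_mulxl j MDm.
have {}sw : size w = (rD + j).+1 by rewrite sw sMD addSn.
exists w; split=> //.
have Iw : IS (ZOm s d Om (F + G)) w by apply: (lideal_iter (Iset_lideal _)).
have [U [V [IU IV wE]]] : lsum (IS (ZOm s d Om F)) (IS (ZOm s d Om G)) w.
  by apply: Iset_ZOm_lsum => a Oa Fa Ga; apply: Iw; split; rewrite // evD Fa Ga addr0.
have [U' [sU' IUU']] := lideal_mod_monic (Iset_lideal Om) U MBm IMB.
have sU'n : (size U' <= n)%N by rewrite -ltnS -sMB.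
rewrite -[w](subrK U') addrC; apply: in_span_cat.
  apply: spanF => //; rewrite -[U'](subKr U).
  by apply: lidealB (Iset_lideal _) _ _ IU (ZOm_of_Om _ _ IUU').
apply: spanG.
  have -> : w - U' = V + (U - U') by rewrite wE [U + V]addrC -addrA.
  by apply: lidealD (Iset_lideal _) _ _ IV (ZOm_of_Om _ _ IUU').
by rewrite (leq_trans (size_polyD _ _)) // geq_max size_polyN sU'n sw; lia.
Qed.

Lemma EB_eq0 (F : {poly R}) : (size F <= n)%N -> EB s d B F = 0 <-> F = 0.
Proof.
move=> sF; split=> [EB0|->]; last by apply/rowP => k; rewrite !mxE ev0.
apply: (Iset_basis_small _ sF); apply/Iset_basis_nth => k kn.
by have := congr1 (fun v : 'rV[R]_n => v 0 (Ordinal kn)) EB0; rewrite !mxE.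
Qed.

Lemma EBD (F G : {poly R}) : EB s d B (F + G) = EB s d B F + EB s d B G.
Proof. by apply/rowP => k; rewrite !mxE evD. Qed.

Lemma EBZ c (F : {poly R}) : EB s d B (c *: F) = c *: EB s d B F.
Proof. by apply/rowP => k; rewrite !mxE evZ. Qed.

(* Reduce [sum_k f_k L_k] modulo a monic polynomial of degree [n] vanishing on [B]. *)
Lemma interpBP (f : 'rV[R]_n) :
  (size (interpB s d B f) <= n)%N /\ EB s d B (interpB s d B f) = f.
Proof.
apply: (epsilon_spec (inhabits 0) (fun F : {poly R} => (size F <= n)%N /\ EB s d B F = f)).
have [L hL] := lagrange_family; have [M [Mm sM IBM]] := basis_monic.
have [P [sP IP]] := lideal_mod_monic (Iset_lideal _) (\sum_(k < n) f 0 k *: L k) Mm IBM.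
exists P; split; first by rewrite -ltnS -sM.
apply/rowP => -[k kn]; rewrite mxE; have := IP _ (mem_nth 0 kn).
by rewrite evB (ev_lagrange_sum hL (fun k => f 0 k) kn) => /eqP; rewrite subr_eq0 => /eqP.
Qed.

Lemma interpB_unique (f : 'rV[R]_n) (F : {poly R}) :
  (size F <= n)%N -> EB s d B F = f -> interpB s d B f = F.
Proof.
move=> sF EBF; have [sI EBI] := interpBP f; apply/eqP; rewrite -subr_eq0; apply/eqP/EB_eq0.
  by rewrite (leq_trans (size_polyD _ _)) // geq_max sI size_polyN.
by rewrite -scaleN1r EBD EBZ scaleN1r EBI EBF subrr.
Qed.

Lemma wtB_eq0 (f : 'rV[R]_n) : wtB s d Om B f = 0%N <-> f = 0.
Proof.
have [sI EBI] := interpBP f; rewrite /wtB (wtO_eq0 sI) -(EB_eq0 sI) EBI.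
by split=> [->|->]; rewrite // -EBI.
Qed.

Lemma wtB_add (f g : 'rV[R]_n) :
  (wtB s d Om B (f + g) <= wtB s d Om B f + wtB s d Om B g)%N.
Proof.
have [sf EBf] := interpBP f; have [sg EBg] := interpBP g.
rewrite /wtB (interpB_unique (F := interpB s d B f + interpB s d B g)) ?wtO_add //.
  by rewrite (leq_trans (size_polyD _ _)) // geq_max sf sg.
by rewrite EBD EBf EBg.
Qed.

Lemma wtBZ c (f : 'rV[R]_n) : c != 0 -> wtB s d Om B (c *: f) = wtB s d Om B f.
Proof.
move=> c0; have [sf EBf] := interpBP f.
rewrite /wtB (interpB_unique (F := c *: interpB s d B f)) ?wtOZ ?EBZ ?EBf //.
exact: leq_trans (size_scale_leq _ _) sf.
Qed.

Lemma dB_eq0 (f g : 'rV[R]_n) : dB s d Om B f g = 0%N <-> f = g.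
Proof. by rewrite /dB wtB_eq0; split=> [/eqP|->]; rewrite ?subrr ?subr_eq0 => //= /eqP. Qed.

Lemma dBC (f g : 'rV[R]_n) : dB s d Om B f g = dB s d Om B g f.
Proof. by rewrite /dB -opprB -scaleN1r wtBZ // oppr_eq0 oner_eq0. Qed.

Lemma dB_triangle (f g h : 'rV[R]_n) :
  (dB s d Om B f h <= dB s d Om B f g + dB s d Om B g h)%N.
Proof. by rewrite /dB -[f - h](subrKA g) wtB_add. Qed.

End PBasis.
End SkewPolynomials.

Theorem mainTheorem1 (R : unitRingType)
  (Hdiv : forall x : R, x != 0 -> x \is a GRing.unit)
  (s : {rmorphism R -> R}) (d : R -> R)
  (d_add : forall a b : R, d (a + b) = d a + d b)
  (d_mul : forall a b : R, d (a * b) = s a * d b + d a * b)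
  (Om : R -> Prop) (B : seq R)
  (HOm : Pclosed s d Om) (HB : Pbasis s d Om B) :
  let n := size B in
 
  (forall F G : {poly R}, (size F <= n)%N -> (size G <= n)%N ->
     ((wtO s d Om F = 0%N <-> EB s d B F = 0) /\ (EB s d B F = 0 <-> F = 0)) /\
     (wtO s d Om (F + G) <= wtO s d Om F + wtO s d Om G)%N /\
     (forall a : R, a != 0 -> wtO s d Om (a *: F) = wtO s d Om F)) /\
  (forall f g : 'rV[R]_n,
     ((wtB s d Om B f = 0%N <-> f = 0) /\
      (wtB s d Om B (f + g) <= wtB s d Om B f + wtB s d Om B g)%N /\
      (forall a : R, a != 0 -> wtB s d Om B (a *: f) = wtB s d Om B f))) /\
  (forall f g h : 'rV[R]_n,
     (dB s d Om B f g = 0%N <-> f = g) /\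
     dB s d Om B f g = dB s d Om B g f /\
     (dB s d Om B f h <= dB s d Om B f g + dB s d Om B g h)%N).
Proof.
move=> n; split; [|split].
- move=> F G sF _.
  have wt0 := wtO_eq0 Hdiv d_add d_mul HB sF; have EB0 := EB_eq0 Hdiv d_add d_mul HB sF.
  split; first tauto.
  split; first exact: (wtO_add Hdiv d_add d_mul HOm HB).
  by move=> a; apply: (wtOZ Hdiv s d_add Om).
- move=> f g; split; first exact: (wtB_eq0 Hdiv d_add d_mul HB).
  split; first exact: (wtB_add Hdiv d_add d_mul HOm HB).
  by move=> a; apply: (wtBZ Hdiv d_add d_mul HB).
- move=> f g h; split; first exact: (dB_eq0 Hdiv d_add d_mul HB).
  split; first exact: (dBC Hdiv d_add d_mul HB).
  exact: (dB_triangle Hdiv d_add d_mul HOm HB).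
Qed.
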